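(* Comparing the Data Revocation Game (partial revocation allowed) with the Forbidding Game (partial revocation forbidden) on the same parameters: there exist parameter choices and a Nash equilibrium $d^{a}$ of the allowing game and a pure Nash equilibrium $d^{f}$ of the forbidding game such that $\sum_i d^a_i>\sum_i d^f_i$; there exist parameter choices with such equilibria where $\sum_i d^a_i<\sum_i d^f_i$; and there exist parameter choices with such equilibria where $\sum_i d^a_i=\sum_i d^f_i$. Likewise, users' payoffs at $d^a$ can be higher than, lower than, or equal to those at $d^f$: there exist parameter choices with such equilibria where every user's payoff is strictly higher at $d^a$; where some user's payoff is strictly lower at $d^a$ than at $d^f$; and where every user's payoff is the same at $d^a$ and $d^f$.
   Context: Data Revocation Game (allowing partial revocation): a finite set of users $\mathcal I=\{1,\dots,I\}$, $I\ge 2$, each with parameters $d_i^{\max}>0$, $\epsilon_i>0$, $\xi_i>0$, $\ell_i>0$, $\theta_i\ge 0$; each user chooses $d_i\in[0,d_i^{\max}]$, with payoff $$U_i(d_i,\boldsymbol{d_{-i}})=\ln\Big(\sum_{j\in\mathcal I}d_j+\epsilon_i\Big)-\xi_i d_i\ell_i-\theta_i d_i\sum_{j\neq i}\Big(1-\frac{d_j}{d_j^{\max}}\Big)\ell_j^2 .$$ Forbidding Game: identical, except that each user's strategy set is $\{0,d_i^{\max}\}$. In either game, a (pure) Nash equilibrium is a profile from which no user can strictly increase its payoff by unilaterally changing to another strategy in its own strategy set. *)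

From Stdlib Require Import Reals Lra Lia List.
Import ListNotations.
Open Scope R_scope.

(* Users are indexed 0, ..., I-1. *)
Record Params := mkParams {
  nusers : nat;
  dmax  : nat -> R;
  eps   : nat -> R;
  xi    : nat -> R;
  ell   : nat -> R;
  theta : nat -> R }.

Definition valid_params (p : Params) : Prop :=
  (2 <= nusers p)%nat /\
  forall i, (i < nusers p)%nat ->
    0 < dmax p i /\ 0 < eps p i /\ 0 < xi p i /\ 0 < ell p i /\ 0 <= theta p i.

Definition sumU (p : Params) (f : nat -> R) : R :=
  fold_right Rplus 0 (map f (seq 0 (nusers p))).

(* A strategy profile: d i is user i's data amount (only i < I matters). *)
Definition profile := nat -> R.

Definition payoff (p : Params) (i : nat) (d : profile) : R :=
  ln (sumU p d + eps p i)
  - xi p i * d i * ell p i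
  - theta p i * d i *
      sumU p (fun j => if Nat.eq_dec j i then 0
                       else (1 - d j / dmax p j) * (ell p j) ^ 2).

Definition update (d : profile) (i : nat) (x : R) : profile :=
  fun j => if Nat.eq_dec j i then x else d j.

Definition NE_allow (p : Params) (d : profile) : Prop :=
  forall i, (i < nusers p)%nat ->
    (0 <= d i <= dmax p i) /\
    forall x, 0 <= x <= dmax p i -> payoff p i (update d i x) <= payoff p i d.

Definition NE_forbid (p : Params) (d : profile) : Prop :=
  forall i, (i < nusers p)%nat ->
    (d i = 0 \/ d i = dmax p i) /\
    forall x, (x = 0 \/ x = dmax p i) -> payoff p i (update d i x) <= payoff p i d.

(* Without the privacy term (theta = 0) a user's payoff ln (S + eps_i) - xi_i ell_i d_i
   is concave in its own contribution, so in the allowing game the first-order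
   condition of this concave problem on [0, dmax_i] already certifies a best response.
   In the forbidding game a user may be stuck at 0 although a small contribution would
   pay off (dmax is too expensive), or stuck at dmax although it over-contributes
   (revoking everything is worse); two such two-user instances realise the strict
   comparisons, and the all-zero profile realises equality. *)

From Stdlib Require Import Reals Lra Lia List.
Open Scope R_scope.

Lemma ln_le_sub_one (x : R) : 0 < x -> ln x <= x - 1.
Proof. intros Hx. pose proof (exp_ineq1_le (ln x)) as Hexp. rewrite exp_ln in Hexp; lra. Qed.

Lemma ln_le_tangent (y y0 : R) : 0 < y -> 0 < y0 -> ln y <= ln y0 + (y - y0) / y0.
Proof.
  intros Hy Hy0.
  assert (Hq : 0 < y / y0) by (apply Rdiv_lt_0_compat; lra).
  assert (Hln : ln y = ln y0 + ln (y / y0)).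
  { rewrite <- ln_mult by lra. f_equal. field. lra. }
  assert (Hfrac : (y - y0) / y0 = y / y0 - 1) by (field; lra).
  pose proof (ln_le_sub_one _ Hq). lra.
Qed.

Lemma sum_map_update (d : profile) (i : nat) (x : R) (l : list nat) :
  fold_right Rplus 0 (map (update d i x) l)
  = fold_right Rplus 0 (map d l) + INR (count_occ Nat.eq_dec l i) * (x - d i).
Proof.
  induction l as [|j l IH]; simpl; [lra|].
  rewrite IH. unfold update.
  destruct (Nat.eq_dec j i) as [->|Hji].
  - rewrite S_INR. ring.
  - ring.
Qed.

Lemma sumU_update (p : Params) (d : profile) (i : nat) (x : R) :
  (i < nusers p)%nat -> sumU p (update d i x) = sumU p d + (x - d i).
Proof.
  intros Hi. unfold sumU. rewrite sum_map_update.
  assert (Hcount : count_occ Nat.eq_dec (seq 0 (nusers p)) i = 1%nat).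
  { apply (proj1 (NoDup_count_occ' _ _) (seq_NoDup _ _)). apply in_seq. lia. }
  rewrite Hcount. simpl. ring.
Qed.

Lemma sumU_nonneg (p : Params) (d : profile) :
  (forall j, (j < nusers p)%nat -> 0 <= d j) -> 0 <= sumU p d.
Proof.
  unfold sumU. intros Hd.
  assert (Hin : forall j, In j (seq 0 (nusers p)) -> 0 <= d j)
    by (intros j Hj; apply Hd; apply in_seq in Hj; lia).
  clear Hd. revert Hin.
  induction (seq 0 (nusers p)) as [|j l IH]; intros Hin; simpl; [lra|].
  pose proof (Hin j (or_introl eq_refl)).
  assert (0 <= fold_right Rplus 0 (map d l)) by (apply IH; intros k Hk; apply Hin; now right).
  lra.
Qed.

Lemma payoff_selfish (p : Params) (i : nat) (d : profile) :
  theta p i = 0 -> payoff p i d = ln (sumU p d + eps p i) - xi p i * d i * ell p i.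
Proof. intros H0. unfold payoff. rewrite H0. ring. Qed.

Lemma payoff_update_selfish (p : Params) (i : nat) (d : profile) (x : R) :
  (i < nusers p)%nat -> theta p i = 0 ->
  payoff p i (update d i x)
  = ln (sumU p d + (x - d i) + eps p i) - xi p i * x * ell p i.
Proof.
  intros Hi H0. rewrite payoff_selfish, sumU_update by assumption.
  unfold update. destruct (Nat.eq_dec i i); [reflexivity|congruence].
Qed.

(* The derivative of user i's payoff in its own contribution, when theta_i = 0. *)
Definition marginal_payoff (p : Params) (d : profile) (i : nat) : R :=
  / (sumU p d + eps p i) - xi p i * ell p i.

Definition first_order_condition (p : Params) (d : profile) (i : nat) : Prop :=
  forall x, 0 <= x <= dmax p i -> (x - d i) * marginal_payoff p d i <= 0.

Lemma first_order_condition_best_response (p : Params) (d : profile) (i : nat) (x : R) :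
  valid_params p -> (i < nusers p)%nat -> theta p i = 0 ->
  (forall j, (j < nusers p)%nat -> 0 <= d j) ->
  first_order_condition p d i -> 0 <= x <= dmax p i ->
  payoff p i (update d i x) <= payoff p i d.
Proof.
  intros [_ Hval] Hi H0 Hd Hfoc Hx.
  destruct (Hval i Hi) as (_ & Heps & _).
  rewrite payoff_update_selfish, payoff_selfish by assumption.
  set (s := sumU p d + eps p i).
  assert (Hs : 0 < s) by (pose proof (sumU_nonneg p d Hd); unfold s; lra).
  assert (Hs' : 0 < s + (x - d i)).
  { assert (Hupd : 0 <= sumU p (update d i x)).
    { apply sumU_nonneg. intros j Hj. unfold update.
      destruct (Nat.eq_dec j i); [lra|auto]. }
    rewrite sumU_update in Hupd by exact Hi. unfold s; lra. }
  (* the tangent of ln at s bounds the gain by (x - d i) * marginal_payoff p d i *)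
  pose proof (ln_le_tangent _ _ Hs' Hs) as Htan.
  pose proof (Hfoc x Hx) as Hsign. unfold marginal_payoff in Hsign; fold s in Hsign.
  replace (sumU p d + (x - d i) + eps p i) with (s + (x - d i)) by (unfold s; ring).
  replace ((s + (x - d i) - s) / s) with ((x - d i) * / s) in Htan by (field; lra).
  nra.
Qed.

Lemma NE_allow_of_first_order_condition (p : Params) (d : profile) :
  valid_params p -> (forall i, (i < nusers p)%nat -> theta p i = 0) ->
  (forall i, (i < nusers p)%nat -> 0 <= d i <= dmax p i /\ first_order_condition p d i) ->
  NE_allow p d.
Proof.
  intros Hp H0 Hd i Hi. split; [apply Hd, Hi|].
  intros x Hx. apply first_order_condition_best_response; auto.
  - intros j Hj. apply Hd, Hj.
  - apply Hd, Hi.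
Qed.

Lemma first_order_condition_intro (p : Params) (d : profile) (i : nat) (s : R) :
  sumU p d + eps p i = s -> 0 < s ->
  (forall x, 0 <= x <= dmax p i -> (x - d i) * (1 - xi p i * ell p i * s) <= 0) ->
  first_order_condition p d i.
Proof.
  intros Hsum Hs Hsign x Hx. unfold marginal_payoff. rewrite Hsum.
  replace (/ s - xi p i * ell p i) with ((1 - xi p i * ell p i * s) * / s) by (field; lra).
  pose proof (Hsign x Hx). pose proof (Rinv_0_lt_compat s Hs). nra.
Qed.

Lemma payoff_update_self (p : Params) (d : profile) (i : nat) :
  (i < nusers p)%nat -> theta p i = 0 -> payoff p i (update d i (d i)) = payoff p i d.
Proof.
  intros Hi H0. rewrite payoff_update_selfish, payoff_selfish by assumption.
  replace (sumU p d + (d i - d i) + eps p i) with (sumU p d + eps p i) by ring.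
  reflexivity.
Qed.

Lemma NE_forbid_intro (p : Params) (d : profile) :
  (forall i, (i < nusers p)%nat -> theta p i = 0) ->
  (forall i, (i < nusers p)%nat ->
     (d i = 0 /\ payoff p i (update d i (dmax p i)) <= payoff p i d) \/
     (d i = dmax p i /\ payoff p i (update d i 0) <= payoff p i d)) ->
  NE_forbid p d.
Proof.
  intros H0 Hdev i Hi.
  assert (Hstay : payoff p i (update d i (d i)) <= payoff p i d)
    by (rewrite payoff_update_self by auto; lra).
  destruct (Hdev i Hi) as [[Hd Hleave]|[Hd Hleave]]; (split; [tauto|]);
    intros x [-> | ->]; rewrite ?Hd in Hstay; assumption.
Qed.

Definition two_users (dm c : nat -> R) : Params :=
  mkParams 2 dm (fun _ => 1) c (fun _ => 1) (fun _ => 0).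

Lemma two_users_valid (dm c : nat -> R) :
  (forall i, 0 < dm i) -> (forall i, 0 < c i) -> valid_params (two_users dm c).
Proof. intros Hdm Hc. split; [simpl; lia|]. intros i _; simpl; repeat split; auto; lra. Qed.

Definition zero_profile : profile := fun _ => 0.

Definition params_equal : Params := two_users (fun _ => 1) (fun _ => 1).

Lemma params_equal_equilibria :
  valid_params params_equal /\ NE_allow params_equal zero_profile /\
  NE_forbid params_equal zero_profile.
Proof.
  assert (Hp : valid_params params_equal) by (apply two_users_valid; intros; lra).
  assert (Hallow : NE_allow params_equal zero_profile).
  { apply NE_allow_of_first_order_condition; [exact Hp|reflexivity|].
    intros i Hi. split; [simpl; unfold zero_profile; lra|].
    apply (first_order_condition_intro _ _ _ 1); [unfold sumU, zero_profile; simpl; lra|lra|].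
    intros x _. simpl. lra. }
  split; [exact Hp|split; [exact Hallow|]].
  apply NE_forbid_intro; [reflexivity|]. intros i Hi. left. split; [reflexivity|].
  apply Hallow; [exact Hi|]. simpl. lra.
Qed.

(* With dmax = 8 full participation costs 4 > ln 9, so nobody participates in the
   forbidding game, while each user contributes 1/2 in the allowing game. *)
Definition params_underprovision : Params := two_users (fun _ => 8) (fun _ => / 2).

Definition half_profile : profile := fun _ => / 2.

Lemma params_underprovision_equilibria :
  valid_params params_underprovision /\ NE_allow params_underprovision half_profile /\
  NE_forbid params_underprovision zero_profile.
Proof.
  assert (Hp : valid_params params_underprovision) by (apply two_users_valid; intros; lra).
  split; [exact Hp|split].
  - apply NE_allow_of_first_order_condition; [exact Hp|reflexivity|].
    intros i Hi. split; [simpl; unfold half_profile; lra|].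
    apply (first_order_condition_intro _ _ _ 2); [unfold sumU, half_profile; simpl; lra|lra|].
    intros x _. simpl. lra.
  - assert (Hln9 : ln 9 <= 4).
    { replace 9 with (3 * 3) by lra. rewrite ln_mult by lra.
      pose proof (ln_le_sub_one 3). lra. }
    apply NE_forbid_intro; [reflexivity|]. intros i Hi. left. split; [reflexivity|].
    rewrite payoff_update_selfish, payoff_selfish by (reflexivity || exact Hi).
    unfold sumU, zero_profile; simpl.
    replace (0 + (0 + 0) + (8 - 0) + 1) with 9 by lra.
    replace (0 + (0 + 0) + 1) with 1 by lra. rewrite ln_1. lra.
Qed.

(* User 0 would like to contribute 1 < dmax = 2; revoking everything costs more
   (ln 3 >= 1) than over-contributing, so it keeps 2 in the forbidding game. *)
Definition params_overprovision : Params :=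
  two_users (fun i => match i with O => 2 | _ => 1 end) (fun i => match i with O => / 2 | _ => 1 end).

Definition interior_profile : profile := fun i => match i with O => 1 | _ => 0 end.
Definition full_profile : profile := fun i => match i with O => 2 | _ => 0 end.

Lemma params_overprovision_equilibria :
  valid_params params_overprovision /\ NE_allow params_overprovision interior_profile /\
  NE_forbid params_overprovision full_profile.
Proof.
  assert (Hp : valid_params params_overprovision)
    by (apply two_users_valid; intros [|i]; lra).
  split; [exact Hp|split].
  - apply NE_allow_of_first_order_condition; [exact Hp|reflexivity|].
    intros [|[|i]] Hi; simpl in Hi; [| |lia];
      (split; [simpl; lra|]);
      (apply (first_order_condition_intro _ _ _ 2); [unfold sumU; simpl; lra|lra|]);
      intros x Hx; simpl in *; nra.
  - assert (Hln3 : 1 <= ln 3).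
    { rewrite <- (ln_exp 1) at 1.
      destruct (Rle_lt_or_eq_dec _ _ exp_le_3) as [Hlt|Heq]; [|rewrite Heq; lra].
      apply Rlt_le, ln_increasing; [apply exp_pos|exact Hlt]. }
    pose proof (ln_le_tangent 4 3) as Hln4.
    apply NE_forbid_intro; [reflexivity|].
    intros [|[|i]] Hi; simpl in Hi; [| |lia];
      [right|left]; (split; [reflexivity|]);
      rewrite payoff_update_selfish, payoff_selfish by (reflexivity || exact Hi);
      unfold sumU, full_profile; simpl.
    + replace (2 + (0 + 0) + (0 - 2) + 1) with 1 by lra.
      replace (2 + (0 + 0) + 1) with 3 by lra. rewrite ln_1. lra.
    + replace (2 + (0 + 0) + (1 - 0) + 1) with 4 by lra.
      replace (2 + (0 + 0) + 1) with 3 by lra. lra.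
Qed.

Lemma params_underprovision_payoffs (i : nat) :
  (i < nusers params_underprovision)%nat ->
  payoff params_underprovision i half_profile > payoff params_underprovision i zero_profile.
Proof.
  intros Hi. rewrite !payoff_selfish by reflexivity.
  unfold sumU, half_profile, zero_profile; simpl.
  replace (/ 2 + (/ 2 + 0) + 1) with 2 by lra.
  replace (0 + (0 + 0) + 1) with 1 by lra.
  rewrite ln_1. pose proof ln_lt_2. lra.
Qed.

Lemma params_overprovision_payoff_user1 :
  payoff params_overprovision 1 interior_profile < payoff params_overprovision 1 full_profile.
Proof.
  rewrite !payoff_selfish by reflexivity.
  unfold sumU, interior_profile, full_profile; simpl.
  replace (1 + (0 + 0) + 1) with 2 by lra.
  replace (2 + (0 + 0) + 1) with 3 by lra.
  pose proof (ln_increasing 2 3 ltac:(lra) ltac:(lra)). lra.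
Qed.

Theorem proposition5 :
  (exists p da df, valid_params p /\ NE_allow p da /\ NE_forbid p df /\
     sumU p da > sumU p df) /\
  (exists p da df, valid_params p /\ NE_allow p da /\ NE_forbid p df /\
     sumU p da < sumU p df) /\
  (exists p da df, valid_params p /\ NE_allow p da /\ NE_forbid p df /\
     sumU p da = sumU p df) /\
  (exists p da df, valid_params p /\ NE_allow p da /\ NE_forbid p df /\
     forall i, (i < nusers p)%nat -> payoff p i da > payoff p i df) /\
  (exists p da df, valid_params p /\ NE_allow p da /\ NE_forbid p df /\
     exists i, (i < nusers p)%nat /\ payoff p i da < payoff p i df) /\
  (exists p da df, valid_params p /\ NE_allow p da /\ NE_forbid p df /\
     forall i, (i < nusers p)%nat -> payoff p i da = payoff p i df).
Proof.
  pose proof params_equal_equilibria as (Ep & Ea & Ef).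
  pose proof params_underprovision_equilibria as (Up & Ua & Uf).
  pose proof params_overprovision_equilibria as (Op & Oa & Of).
  split; [|split; [|split; [|split; [|split]]]].
  - exists params_underprovision, half_profile, zero_profile.
    refine (conj Up (conj Ua (conj Uf _))).
    unfold sumU, half_profile, zero_profile; simpl; lra.
  - exists params_overprovision, interior_profile, full_profile.
    refine (conj Op (conj Oa (conj Of _))).
    unfold sumU, interior_profile, full_profile; simpl; lra.
  - exists params_equal, zero_profile, zero_profile.
    exact (conj Ep (conj Ea (conj Ef eq_refl))).
  - exists params_underprovision, half_profile, zero_profile.
    exact (conj Up (conj Ua (conj Uf params_underprovision_payoffs))).
  - exists params_overprovision, interior_profile, full_profile.
    refine (conj Op (conj Oa (conj Of _))).
    exists 1%nat. split; [simpl; lia|exact params_overprovision_payoff_user1].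
  - exists params_equal, zero_profile, zero_profile.
    exact (conj Ep (conj Ea (conj Ef (fun _ _ => eq_refl)))).
Qed.
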